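(* Suppose $w$ induces the triangulation $Z$ and fix $\epsilon>0$. There are constants $C,a>0$ (depending on $w,\Delta,\epsilon$) such that for all sufficiently small $\delta>0$: if $S\in Z$ and $x\in P_\Sigma$ satisfy $\rho_m(x)>\epsilon$ for all $m\in S$, then $\rho_m(x)\le C\delta^a$ for every $m\in A\setminus S$ such that $S\cup\{m\}$ is not (the vertex set of) a simplex of $Z$.
   Context: Let $M\cong\mathbb{Z}^2$, $\Delta\subset M_{\mathbb{R}}$ a 2-dimensional lattice polygon, $A=\Delta\cap M$, $P_\Sigma$ the projective toric surface of the normal fan of $\Delta$ with torus $(\mathbb{C}^* )^2$, $s_m(x)=x^m$ for $m\in A$. For $w\in\mathbb{Z}^A$, $\delta\in(0,1)$: $\rho_m=\delta^{2w_m}|s_m|^2/\sum_{m'\in A}\delta^{2w_{m'}}|s_{m'}|^2$ (extended continuously to $P_\Sigma$). We say $w$ induces the triangulation $Z$ if $Z$ is a triangulation of $\Delta$ whose vertex set is all of $A$, each triangle containing no lattice points other than its vertices, such that for every simplex $\sigma$ of $Z$ there is an affine $\ell_\sigma$ with $w_m=\ell_\sigma(m)$ for vertices $m$ of $\sigma$ and $w_m>\ell_\sigma(m)$ for all other $m\in A$. Simplices of $Z$ are identified with their vertex sets $S\subset A$. *)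

From Stdlib Require Import Reals ZArith List Bool.
From Coquelicot Require Import Coquelicot.
Open Scope R_scope.

Definition pt := (Z * Z)%type.
Definition toR (p : pt) : R * R := (IZR (fst p), IZR (snd p)).

Definition in_hull (V : list (R * R)) (x : R * R) : Prop :=
  exists l : list R,
    length l = length V /\ List.Forall (fun t => 0 <= t) l /\
    fold_right Rplus 0 l = 1 /\
    fst x = fold_right Rplus 0 (map (fun c => fst c * fst (snd c)) (combine l V)) /\
    snd x = fold_right Rplus 0 (map (fun c => fst c * snd (snd c)) (combine l V)).

Definition conv (V : list pt) (x : R * R) : Prop := in_hull (map toR V) x.

(* Delta = conv V is a 2-dimensional lattice polygon: V contains three
   non-collinear lattice points. *)
Definition lattice_polygon (V : list pt) : Prop :=
  exists p q r, In p V /\ In q V /\ In r V /\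
    ((fst q - fst p) * (snd r - snd p) - (snd q - snd p) * (fst r - fst p))%Z <> 0%Z.

Definition enumerates_A (V : list pt) (Al : list pt) : Prop :=
  NoDup Al /\ forall m : pt, In m Al <-> conv V (toR m).

Definition tri := (pt * pt * pt)%type.
Definition tri_verts (T : tri) : list pt :=
  match T with (p, q, r) => p :: q :: r :: nil end.
Definition tri_nondeg (T : tri) : Prop :=
  match T with (p, q, r) =>
    ((fst q - fst p) * (snd r - snd p) - (snd q - snd p) * (fst r - fst p))%Z <> 0%Z
  end.

Definition pt_eqb (p q : pt) : bool := Z.eqb (fst p) (fst q) && Z.eqb (snd p) (snd q).
Definition pt_memb (p : pt) (l : list pt) : bool := existsb (pt_eqb p) l.
Definition common_verts (T1 T2 : tri) : list pt :=
  filter (fun p => pt_memb p (tri_verts T2)) (tri_verts T1).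

Definition triangulation (V Al : list pt) (Zt : list tri) : Prop :=
  (forall T, In T Zt -> tri_nondeg T /\ forall p, In p (tri_verts T) -> In p Al) /\
  (forall x : R * R, conv V x <-> exists T, In T Zt /\ conv (tri_verts T) x) /\
  (forall T1 T2 x, In T1 Zt -> In T2 Zt ->
     conv (tri_verts T1) x -> conv (tri_verts T2) x -> conv (common_verts T1 T2) x) /\
  (forall m, In m Al -> exists T, In T Zt /\ In m (tri_verts T)) /\
  (forall T (p : pt), In T Zt -> conv (tri_verts T) (toR p) -> In p (tri_verts T)).

(* Simplices of Zt (all faces: vertices, edges, triangles), identified with
   their vertex sets S (as predicates on lattice points). *)
Definition is_simplex (Zt : list tri) (S : pt -> Prop) : Prop :=
  (exists p, S p) /\ exists T, In T Zt /\ forall p, S p -> In p (tri_verts T).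

Definition induces (V Al : list pt) (w : pt -> Z) (Zt : list tri) : Prop :=
  triangulation V Al Zt /\
  forall S, is_simplex Zt S ->
    exists a b c : R,
      (forall m, In m Al -> S m -> IZR (w m) = a * IZR (fst m) + b * IZR (snd m) + c) /\
      (forall m, In m Al -> ~ S m -> IZR (w m) > a * IZR (fst m) + b * IZR (snd m) + c).

(* |s_m(x)|^2 for x = (z1, z2) in the torus (C^* )^2. *)
Definition abs_s2 (z1 z2 : C) (m : pt) : R :=
  powerRZ (Cmod z1) (2 * fst m) * powerRZ (Cmod z2) (2 * snd m).

Definition wterm (delta : R) (w : pt -> Z) (z1 z2 : C) (m : pt) : R :=
  powerRZ delta (2 * w m) * abs_s2 z1 z2 m.

Definition rho (Al : list pt) (delta : R) (w : pt -> Z) (z1 z2 : C) (m : pt) : R :=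
  wterm delta w z1 z2 m / fold_right Rplus 0 (map (wterm delta w z1 z2) Al).

(* r : A -> R is the tuple (rho_m(x))_{m in A} of some point x of P_Sigma.
   Since rho extends continuously to the compact P_Sigma in which the torus is
   dense, these tuples are exactly the limits of tuples at torus points. *)
Definition rho_value_on_PSigma (Al : list pt) (delta : R) (w : pt -> Z) (r : pt -> R) : Prop :=
  forall eta : R, 0 < eta ->
    exists z1 z2 : C, z1 <> 0%C /\ z2 <> 0%C /\
      forall m, In m Al -> Rabs (rho Al delta w z1 z2 m - r m) < eta.

(* At a torus point, rho is the softmax of F m = 2 w_m ln delta + 2 m1 ln|z1| + 2 m2 ln|z2|,
   an affine function of (w_m, m) whose weight coefficient is negative. If rho_s > eps on S,
   then F j < F s + ln(1/eps) for every j in A. Let P consist of S and m, and let T be a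
   triangle of Z containing the barycenter of P. Since P is not a face of T, the heights w
   exceed the affine lift l_T (equal to w on the vertices of T) by the uniform gap g > 0
   somewhere on P, so the sum of F over P is at most |P| (F s + ln(1/eps)) + 2 g ln delta.
   Comparing with the lower bound coming from S, which has at most 3 points, gives
   F m - F s <= 7 ln(1/eps) + 2 g ln delta, i.e. rho_m <= eps^-7 delta^(2g); such bounds at
   torus points pass to P_Sigma by density. *)

From Stdlib Require Import Reals ZArith List Lra Lia Classical ClassicalEpsilon.
From Coquelicot Require Import Coquelicot.
Open Scope R_scope.

Definition sumR {A : Type} (f : A -> R) (l : list A) : R := fold_right Rplus 0 (map f l).

Section Sums.
Context {A : Type}.
Implicit Types (f h : A -> R) (l : list A).

Lemma sumR_cons f a l : sumR f (a :: l) = f a + sumR f l.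
Proof. reflexivity. Qed.

Lemma sumR_map {B : Type} f (g : B -> A) (l : list B) :
  sumR f (map g l) = sumR (fun b => f (g b)) l.
Proof. unfold sumR; now rewrite map_map. Qed.

Lemma sumR_const c l : sumR (fun _ => c) l = INR (length l) * c.
Proof.
  induction l as [|a l IH]; [unfold sumR; simpl; ring|].
  rewrite sumR_cons, IH; cbn [length]; rewrite S_INR; ring.
Qed.

Lemma sumR_lincomb a b c f1 f2 f3 l :
  sumR (fun k => a * f1 k + b * f2 k + c * f3 k) l
  = a * sumR f1 l + b * sumR f2 l + c * sumR f3 l.
Proof. induction l as [|x l IH]; [unfold sumR; simpl; ring|]. rewrite !sumR_cons, IH; ring. Qed.

Lemma sumR_le f h l : (forall k, In k l -> f k <= h k) -> sumR f l <= sumR h l.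
Proof.
  induction l as [|a l IH]; intros Hle; [unfold sumR; simpl; lra|].
  rewrite !sumR_cons.
  assert (f a <= h a) by (apply Hle; left; reflexivity).
  assert (sumR f l <= sumR h l) by (apply IH; intros k Hk; apply Hle; right; exact Hk).
  lra.
Qed.

Lemma sumR_le_gap f h l k0 e :
  (forall k, In k l -> f k <= h k) -> In k0 l -> f k0 + e <= h k0 ->
  sumR f l + e <= sumR h l.
Proof.
  induction l as [|a l IH]; intros Hle Hk0 Hgap; [destruct Hk0|].
  rewrite !sumR_cons.
  assert (f a <= h a) by (apply Hle; left; reflexivity).
  assert (Hle' : forall k, In k l -> f k <= h k) by (intros k Hk; apply Hle; right; exact Hk).
  destruct Hk0 as [<- | Hk0].
  - pose proof (sumR_le f h l Hle'). lra.
  - pose proof (IH Hle' Hk0 Hgap). lra.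
Qed.

Lemma sumR_term_le f l j : (forall k, In k l -> 0 <= f k) -> In j l -> f j <= sumR f l.
Proof.
  intros Hpos Hj.
  pose proof (sumR_le_gap (fun _ => 0) f l j (f j) Hpos Hj ltac:(lra)) as H.
  rewrite sumR_const in H. lra.
Qed.

End Sums.

Definition mix_coeffs (t : R) (l1 l2 : list R) : list R :=
  map (fun p => t * fst p + (1 - t) * snd p) (combine l1 l2).

Lemma sum_mix_coeffs t l1 l2 : length l1 = length l2 ->
  fold_right Rplus 0 (mix_coeffs t l1 l2)
  = t * fold_right Rplus 0 l1 + (1 - t) * fold_right Rplus 0 l2.
Proof.
  revert l2; induction l1 as [|a l1 IH]; intros [|b l2] Hlen; try discriminate; [simpl; ring|].
  injection Hlen as Hlen. unfold mix_coeffs in *; simpl. rewrite IH by exact Hlen. ring.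
Qed.

Lemma lincomb_mix_coeffs (h : R * R -> R) t (Vs : list (R * R)) l1 l2 :
  length l1 = length Vs -> length l2 = length Vs ->
  fold_right Rplus 0 (map (fun c => fst c * h (snd c)) (combine (mix_coeffs t l1 l2) Vs))
  = t * fold_right Rplus 0 (map (fun c => fst c * h (snd c)) (combine l1 Vs))
    + (1 - t) * fold_right Rplus 0 (map (fun c => fst c * h (snd c)) (combine l2 Vs)).
Proof.
  revert l1 l2; induction Vs as [|v Vs IH]; intros [|a l1] [|b l2] H1 H2; try discriminate;
    [simpl; ring|].
  injection H1 as H1; injection H2 as H2.
  unfold mix_coeffs in *; simpl. rewrite IH by assumption. ring.
Qed.

Lemma mix_coeffs_nonneg t l1 l2 : 0 <= t <= 1 ->
  List.Forall (fun c => 0 <= c) l1 -> List.Forall (fun c => 0 <= c) l2 ->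
  List.Forall (fun c => 0 <= c) (mix_coeffs t l1 l2).
Proof.
  intros Ht H1; revert l2; induction H1 as [|a l1 Ha _ IH]; intros [|b l2] H2; try constructor.
  - inversion H2 as [|b' l2' Hb]; subst; simpl.
    assert (0 <= t * a) by (apply Rmult_le_pos; lra).
    assert (0 <= (1 - t) * b) by (apply Rmult_le_pos; lra). lra.
  - apply IH; inversion H2; assumption.
Qed.

Lemma in_hull_convex Vs x y t : in_hull Vs x -> in_hull Vs y -> 0 <= t <= 1 ->
  in_hull Vs (t * fst x + (1 - t) * fst y, t * snd x + (1 - t) * snd y).
Proof.
  intros [l1 [L1 [P1 [S1 [X1 Y1]]]]] [l2 [L2 [P2 [S2 [X2 Y2]]]]] Ht.
  exists (mix_coeffs t l1 l2); repeat split; simpl.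
  - unfold mix_coeffs; rewrite length_map, length_combine, L1, L2; apply Nat.min_id.
  - now apply mix_coeffs_nonneg.
  - rewrite sum_mix_coeffs by congruence; rewrite S1, S2; ring.
  - now rewrite (lincomb_mix_coeffs fst), X1, X2.
  - now rewrite (lincomb_mix_coeffs snd), Y1, Y2.
Qed.

Lemma in_hull_barycenter Vs (P : list (R * R)) : P <> nil ->
  (forall p, In p P -> in_hull Vs p) ->
  in_hull Vs (sumR fst P / INR (length P), sumR snd P / INR (length P)).
Proof.
  induction P as [|p P IH]; intros Hne HP; [congruence|].
  assert (Hp : in_hull Vs p) by (apply HP; left; reflexivity).
  destruct P as [|q P'].
  - unfold sumR; simpl. replace ((fst p + 0) / 1) with (fst p) by field.
    replace ((snd p + 0) / 1) with (snd p) by field. now destruct p.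
  - set (P := q :: P') in *.
    assert (HPhull : in_hull Vs (sumR fst P / INR (length P), sumR snd P / INR (length P)))
      by (apply IH; [discriminate | intros x Hx; apply HP; right; exact Hx]).
    assert (Hn : 0 < INR (length P)) by (apply lt_0_INR; simpl; lia).
    set (n := INR (length P)) in *.
    assert (Ht : 0 <= 1 / (n + 1) <= 1).
    { split; [apply Rlt_le, Rdiv_lt_0_compat; lra|].
      apply (Rmult_le_reg_r (n + 1)); [lra|]. field_simplify; lra. }
    pose proof (in_hull_convex Vs _ _ _ Hp HPhull Ht) as Hmix; simpl in Hmix.
    cbn [length]; rewrite S_INR, !sumR_cons; fold n.
    replace ((fst p + sumR fst P) / (n + 1))
      with (1 / (n + 1) * fst p + (1 - 1 / (n + 1)) * (sumR fst P / n)) by (field; lra).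
    replace ((snd p + sumR snd P) / (n + 1))
      with (1 / (n + 1) * snd p + (1 - 1 / (n + 1)) * (sumR snd P / n)) by (field; lra).
    exact Hmix.
Qed.

Lemma in_hull_affine_le Vs x a b c M : in_hull Vs x ->
  (forall v, In v Vs -> a * fst v + b * snd v + c <= M) ->
  a * fst x + b * snd x + c <= M.
Proof.
  intros [l [Hlen [Hpos [Hsum [Hx Hy]]]]] HV.
  rewrite Hx, Hy, <- (Rmult_1_r c), <- (Rmult_1_r M), <- Hsum.
  clear x Hx Hy Hsum; revert l Hlen Hpos.
  induction Vs as [|v Vs IH]; intros [|t l] Hlen Hpos; try discriminate; [simpl; lra|].
  injection Hlen as Hlen; inversion Hpos as [|t' l' Ht Hl]; subst; simpl.
  assert (t * (a * fst v + b * snd v + c) <= t * M)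
    by (apply Rmult_le_compat_l; [exact Ht | apply HV; left; reflexivity]).
  assert (a * fold_right Rplus 0 (map (fun c => fst c * fst (snd c)) (combine l Vs))
          + b * fold_right Rplus 0 (map (fun c => fst c * snd (snd c)) (combine l Vs))
          + c * fold_right Rplus 0 l <= M * fold_right Rplus 0 l)
    by (apply IH; auto; intros v' Hv'; apply HV; right; exact Hv').
  nra.
Qed.

Definition lifted_face_gap (Al : list pt) (w : pt -> Z) (T : tri) (g : R) : Prop :=
  exists a b c : R,
    (forall k, In k (tri_verts T) -> IZR (w k) = a * IZR (fst k) + b * IZR (snd k) + c) /\
    (forall k, In k Al -> ~ In k (tri_verts T) ->
       a * IZR (fst k) + b * IZR (snd k) + c + g <= IZR (w k)).

Lemma list_pos_lower_bound {A : Type} (l : list A) (Q : A -> R -> Prop) :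
  (forall x g g', Q x g -> g' <= g -> Q x g') ->
  (forall x, In x l -> exists g, 0 < g /\ Q x g) ->
  exists g, 0 < g /\ forall x, In x l -> Q x g.
Proof.
  intros Hmono; induction l as [|a l IH]; intros Hex.
  - exists 1; split; [lra | intros x []].
  - destruct (Hex a (or_introl eq_refl)) as [ga [Hga Qa]].
    destruct IH as [gl [Hgl Ql]]; [intros x Hx; apply Hex; right; exact Hx|].
    exists (Rmin ga gl); split; [now apply Rmin_glb_lt|].
    intros x [<- | Hx]; eapply Hmono; eauto using Rmin_l, Rmin_r.
Qed.

Lemma induces_uniform_gap V Al w Zt : induces V Al w Zt ->
  exists g, 0 < g /\ forall T, In T Zt -> lifted_face_gap Al w T g.
Proof.
  intros [[Htri _] Hind]; apply list_pos_lower_bound.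
  { intros T g g' [a [b [c [Heq Hgt]]]] Hle; exists a, b, c; split; [exact Heq|].
    intros k Hk Hn; specialize (Hgt k Hk Hn); lra. }
  intros T HT.
  destruct (Hind (fun p => In p (tri_verts T))) as [a [b [c [Heq Hgt]]]].
  { split; [destruct T as [[p q] r]; exists p; simpl; auto | exists T; auto]. }
  set (ell := fun k : pt => a * IZR (fst k) + b * IZR (snd k) + c).
  destruct (list_pos_lower_bound Al
              (fun k g => ~ In k (tri_verts T) -> ell k + g <= IZR (w k)))
    as [g [Hg Hgap]].
  - intros k g g' H Hle Hn; specialize (H Hn); lra.
  - intros k Hk; destruct (classic (In k (tri_verts T))) as [Hv | Hn].
    + exists 1; split; [lra | tauto].
    + exists (IZR (w k) - ell k); split; [|intros _; lra].
      specialize (Hgt k Hk Hn); unfold ell; lra.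
  - exists g; split; [exact Hg|]; exists a, b, c; split; [|exact Hgap].
    intros k Hk; apply Heq; [apply (proj2 (Htri T HT)) |]; exact Hk.
Qed.

Definition lin_height (w : pt -> Z) (u L1 L2 : R) (k : pt) : R :=
  u * IZR (w k) + L1 * IZR (fst k) + L2 * IZR (snd k).

Lemma exp_le_exp x y : x <= y -> exp x <= exp y.
Proof. intros [Hlt | ->]; [apply Rlt_le, exp_increasing, Hlt | apply Rle_refl]. Qed.

Section Softmax.
Context {A : Type} (f : A -> R) (l : list A).

Let Zf := sumR (fun k => exp (f k)) l.

Lemma exp_le_partition j : In j l -> exp (f j) <= Zf.
Proof.
  intros Hj; apply (sumR_term_le (fun k => exp (f k))); [|exact Hj].
  intros; apply Rlt_le, exp_pos.
Qed.

Lemma softmax_lt_gap s j eps : In j l -> 0 < eps -> eps < exp (f s) / Zf ->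
  f j < f s - ln eps.
Proof.
  intros Hj Heps Hs.
  pose proof (exp_le_partition j Hj) as HjZ; pose proof (exp_pos (f j)).
  assert (Hlt : exp (ln eps + f j) < exp (f s)).
  { rewrite exp_plus, exp_ln by exact Heps.
    apply (Rmult_lt_compat_r Zf) in Hs; [|lra].
    unfold Rdiv in Hs; rewrite Rmult_assoc, Rinv_l, Rmult_1_r in Hs by lra.
    apply Rle_lt_trans with (eps * Zf); [apply Rmult_le_compat_l; lra | exact Hs]. }
  apply exp_lt_inv in Hlt; lra.
Qed.

Lemma softmax_le_exp_sub m s : In s l -> exp (f m) / Zf <= exp (f m - f s).
Proof.
  intros Hs; pose proof (exp_le_partition s Hs) as HsZ.
  unfold Rminus; rewrite exp_plus, exp_Ropp.
  apply Rmult_le_compat_l; [apply Rlt_le, exp_pos|].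
  apply Rinv_le_contravar; [apply exp_pos | exact HsZ].
Qed.

End Softmax.

Definition log_wterm (delta : R) (w : pt -> Z) (z1 z2 : C) : pt -> R :=
  lin_height w (2 * ln delta) (2 * ln (Cmod z1)) (2 * ln (Cmod z2)).

Lemma rho_softmax Al delta w (z1 z2 : C) k : 0 < delta -> z1 <> 0%C -> z2 <> 0%C ->
  rho Al delta w z1 z2 k
  = exp (log_wterm delta w z1 z2 k) / sumR (fun j => exp (log_wterm delta w z1 z2 j)) Al.
Proof.
  intros Hd Hz1 Hz2.
  pose proof (proj1 (Cmod_gt_0 z1) Hz1); pose proof (proj1 (Cmod_gt_0 z2) Hz2).
  assert (Hw : forall j, wterm delta w z1 z2 j = exp (log_wterm delta w z1 z2 j)).
  { intros j; unfold wterm, abs_s2, log_wterm, lin_height.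
    rewrite !powerRZ_Rpower by assumption; unfold Rpower.
    rewrite <- !exp_plus, !mult_IZR; f_equal; ring. }
  unfold rho, sumR; rewrite Hw; f_equal; f_equal; apply map_ext; exact Hw.
Qed.

Section LiftedTriangulation.
Variables (V Al : list pt) (Zt : list tri) (w : pt -> Z) (g : R).
Hypothesis gap_nonneg : 0 <= g.
Hypothesis face_gap : forall T, In T Zt -> lifted_face_gap Al w T g.
Hypothesis conv_covered : forall x, conv V x -> exists T, In T Zt /\ conv (tri_verts T) x.
Hypothesis A_in_conv : forall k, In k Al -> conv V (toR k).
Hypothesis verts_in_A : forall T p, In T Zt -> In p (tri_verts T) -> In p Al.

Lemma non_face_height_sum_le (P : list pt) u L1 L2 M :
  P <> nil -> (forall k, In k P -> In k Al) ->
  (forall T, In T Zt -> ~ (forall k, In k P -> In k (tri_verts T))) ->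
  u <= 0 -> (forall k, In k Al -> lin_height w u L1 L2 k <= M) ->
  sumR (lin_height w u L1 L2) P <= INR (length P) * M + u * g.
Proof.
  intros Hne HPA Hnotface Hu HM.
  set (n := INR (length P)).
  set (s1 := sumR (fun k : pt => IZR (fst k)) P).
  set (s2 := sumR (fun k : pt => IZR (snd k)) P).
  assert (Hn : 0 < n) by (destruct P; [congruence | apply lt_0_INR; simpl; lia]).
  assert (Hbar : conv V (s1 / n, s2 / n)).
  { pose proof (in_hull_barycenter (map toR V) (map toR P)) as H.
    rewrite !sumR_map, length_map in H. apply H.
    - destruct P; [congruence | discriminate].
    - intros p Hp; apply in_map_iff in Hp as [k [<- Hk]]; apply A_in_conv, HPA, Hk. }
  destruct (conv_covered _ Hbar) as [T [HT Hx]].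
  destruct (face_gap T HT) as [a [b [c [Heq Hgt]]]].
  destruct (not_all_ex_not _ _ (Hnotface T HT)) as [k0 Hk0].
  apply imply_to_and in Hk0 as [Hk0P Hk0T].
  assert (Hsumw : a * s1 + b * s2 + c * n + g <= sumR (fun k => IZR (w k)) P).
  { pose proof (sumR_le_gap (fun k => a * IZR (fst k) + b * IZR (snd k) + c * 1)
                  (fun k => IZR (w k)) P k0 g) as H.
    rewrite sumR_lincomb, sumR_const, !Rmult_1_r in H. apply H; [|exact Hk0P|].
    - intros k Hk; destruct (classic (In k (tri_verts T))) as [Hv | Hv].
      + rewrite (Heq k Hv); lra.
      + specialize (Hgt k (HPA k Hk) Hv); lra.
    - specialize (Hgt k0 (HPA k0 Hk0P) Hk0T); lra. }
  (* where w agrees with the lift of T, lin_height is this affine function of the point *)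
  assert (Hphi : (u * a + L1) * (s1 / n) + (u * b + L2) * (s2 / n) + u * c <= M).
  { apply (in_hull_affine_le _ (s1 / n, s2 / n) _ _ _ _ Hx).
    intros v Hv; apply in_map_iff in Hv as [p [<- Hp]]; simpl.
    pose proof (HM p (verts_in_A T p HT Hp)) as Hp'.
    unfold lin_height in Hp'; rewrite (Heq p Hp) in Hp'; lra. }
  unfold lin_height; rewrite sumR_lincomb; fold s1 s2.
  assert (Hphi_n : (u * a + L1) * s1 + (u * b + L2) * s2 + u * c * n <= n * M).
  { replace ((u * a + L1) * s1 + (u * b + L2) * s2 + u * c * n)
      with (n * ((u * a + L1) * (s1 / n) + (u * b + L2) * (s2 / n) + u * c)) by (field; lra).
    apply Rmult_le_compat_l; lra. }
  pose proof (Rmult_le_compat_neg_l u _ _ Hu Hsumw).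
  lra.
Qed.

Lemma rho_non_simplex_le eps delta (z1 z2 : C) (S : pt -> Prop) m :
  0 < eps -> 0 < delta < 1 -> z1 <> 0%C -> z2 <> 0%C ->
  is_simplex Zt S -> In m Al -> ~ S m -> ~ is_simplex Zt (fun p => S p \/ p = m) ->
  (forall s, S s -> eps < rho Al delta w z1 z2 s) ->
  rho Al delta w z1 z2 m <= Rpower eps (-7) * Rpower delta (2 * g).
Proof.
  intros Heps [Hd0 Hd1] Hz1 Hz2 [[s0 Hs0] [T0 [HT0 HST0]]] Hm HnSm Hns HSrho.
  set (F := log_wterm delta w z1 z2).
  assert (Hrho : forall k, rho Al delta w z1 z2 k = exp (F k) / sumR (fun j => exp (F j)) Al)
    by (intros k; apply rho_softmax; assumption).
  assert (HSA : forall s, S s -> In s Al) by (intros s Hs; apply (verts_in_A T0); auto).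
  set (kap := - ln eps).
  assert (Hnear : forall s j, S s -> In j Al -> F j < F s + kap).
  { intros s j Hs Hj; unfold kap.
    pose proof (softmax_lt_gap F Al s j eps Hj Heps) as H.
    rewrite <- Hrho in H; specialize (H (HSrho s Hs)); lra. }
  assert (Hkap : 0 < kap) by (pose proof (Hnear s0 s0 Hs0 (HSA s0 Hs0)); lra).
  set (Sl := filter (fun p => if excluded_middle_informative (S p) then true else false)
                    (tri_verts T0)).
  assert (HSl : forall p, In p Sl <-> S p).
  { intros p; unfold Sl; rewrite filter_In.
    destruct (excluded_middle_informative (S p)) as [Hp | Hp].
    - split; [intros _; exact Hp | intros _; split; [apply HST0, Hp | reflexivity]].
    - split; [intros [_ Hf]; discriminate Hf | intros H; contradiction]. }
  assert (Hlen : INR (length Sl) <= 3).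
  { replace 3 with (INR (length (tri_verts T0))) by (destruct T0 as [[p q] r]; simpl; ring).
    apply le_INR, filter_length_le. }
  set (u := 2 * ln delta).
  assert (Hu : u <= 0).
  { unfold u; pose proof (ln_increasing delta 1 Hd0 Hd1); rewrite ln_1 in *; lra. }
  assert (Hup : sumR F (m :: Sl) <= INR (length (m :: Sl)) * (F s0 + kap) + u * g).
  { apply non_face_height_sum_le; [discriminate | | | exact Hu | ].
    - intros k [<- | Hk]; [exact Hm | apply HSA, HSl, Hk].
    - intros T HT Hsub; apply Hns; split; [exists m; right; reflexivity|].
      exists T; split; [exact HT|].
      intros p [Hp | ->]; apply Hsub; [right; apply HSl, Hp | left; reflexivity].
    - intros k Hk; apply Rlt_le, Hnear; assumption. }
  assert (Hlow : F m + INR (length Sl) * (F s0 - kap) <= sumR F (m :: Sl)).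
  { rewrite sumR_cons, <- sumR_const; apply Rplus_le_compat_l, sumR_le.
    intros s Hs; apply HSl in Hs; pose proof (Hnear s s0 Hs (HSA s0 Hs0)); lra. }
  cbn [length] in Hup; rewrite S_INR in Hup.
  assert (Hgap : F m - F s0 <= 7 * kap + u * g).
  { assert (INR (length Sl) * kap <= 3 * kap) by (apply Rmult_le_compat_r; lra). nra. }
  rewrite Hrho; eapply Rle_trans; [apply (softmax_le_exp_sub F Al m s0 (HSA s0 Hs0))|].
  unfold Rpower; rewrite <- exp_plus; apply exp_le_exp.
  unfold kap, u in Hgap; lra.
Qed.

End LiftedTriangulation.

Lemma rho_value_le_of_torus_bound Al delta w r (S : pt -> Prop) m eps B :
  0 < eps -> rho_value_on_PSigma Al delta w r -> In m Al ->
  (forall s, S s -> In s Al) -> (forall s, S s -> r s > eps) ->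
  (forall z1 z2 : C, z1 <> 0%C -> z2 <> 0%C ->
     (forall s, S s -> eps / 2 < rho Al delta w z1 z2 s) -> rho Al delta w z1 z2 m <= B) ->
  r m <= B.
Proof.
  intros Heps Hr Hm HSA HSr Htorus.
  apply Rle_plus_epsilon; intros eta Heta.
  pose proof (Rmin_l eta (eps / 2)); pose proof (Rmin_r eta (eps / 2)).
  set (eta' := Rmin eta (eps / 2)) in *.
  destruct (Hr eta') as [z1 [z2 [Hz1 [Hz2 Happrox]]]]; [apply Rmin_glb_lt; lra|].
  assert (Hrho_m : rho Al delta w z1 z2 m <= B).
  { apply Htorus; [exact Hz1 | exact Hz2|].
    intros s Hs; pose proof (Happrox s (HSA s Hs)) as Hs'; apply Rabs_def2 in Hs'.
    pose proof (HSr s Hs); lra. }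
  pose proof (Happrox m Hm) as Hm'; apply Rabs_def2 in Hm'; lra.
Qed.

Theorem mainTheorem5 (V Al : list pt) (Zt : list tri) (w : pt -> Z) (eps : R) :
  lattice_polygon V -> enumerates_A V Al -> induces V Al w Zt -> 0 < eps ->
  exists C0 a : R, 0 < C0 /\ 0 < a /\
    exists delta0 : R, 0 < delta0 /\
      forall delta : R, 0 < delta -> delta < delta0 -> delta < 1 ->
      forall (S : pt -> Prop) (r : pt -> R),
        is_simplex Zt S ->
        rho_value_on_PSigma Al delta w r ->
        (forall m, S m -> r m > eps) ->
        forall m, In m Al -> ~ S m ->
          ~ is_simplex Zt (fun p => S p \/ p = m) ->
          r m <= C0 * Rpower delta a.
Proof.
  intros _ [_ HA] Hind Heps.
  destruct (induces_uniform_gap V Al w Zt Hind) as [g [Hg Hgap]].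
  destruct Hind as [[Htri [Hcov _]] _].
  assert (Hverts : forall T p, In T Zt -> In p (tri_verts T) -> In p Al)
    by (intros T p HT; apply (proj2 (Htri T HT))).
  assert (Hcover : forall x, conv V x -> exists T, In T Zt /\ conv (tri_verts T) x)
    by (intros x; apply Hcov).
  assert (HAconv : forall k, In k Al -> conv V (toR k)) by (intros k; apply HA).
  exists (Rpower (eps / 2) (-7)), (2 * g); split; [apply exp_pos|]; split; [lra|].
  exists 1; split; [lra|].
  intros delta Hd0 _ Hd1 S r HS Hr HSr m Hm HnSm Hns.
  assert (HSA : forall s, S s -> In s Al)
    by (destruct HS as [_ [T [HT HST]]]; intros s Hs; apply (Hverts T); auto).
  apply (rho_value_le_of_torus_bound Al delta w r S m eps _ Heps Hr Hm HSA HSr).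
  intros z1 z2 Hz1 Hz2 HSrho.
  exact (rho_non_simplex_le V Al Zt w g (Rlt_le _ _ Hg) Hgap Hcover HAconv Hverts
           (eps / 2) delta z1 z2 S m ltac:(lra) ltac:(lra) Hz1 Hz2 HS Hm HnSm Hns HSrho).
Qed.
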